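(* Let $\Lambda$ be a row-finite source-free $k$-graph and fix a $\Lambda$-semibranching function system on a $\sigma$-finite measure space $(X, \mu)$. Suppose that a vertex $v$ of $\Lambda$ satisfies $R_{\tau}=R_{v\tau} =D_v$ for all $\tau \in v\Lambda$. If there is a measurable subset $X_v$ of $D_v$ with $0 < \mu(X_v) < \mu(D_v)$, then no $\Lambda$-projective representation arising from this $\Lambda$-semibranching function system is monic.
   Context: A $k$-graph is a countable small category $\Lambda$ with a functor $d:\Lambda\to\mathbb{N}^k$ with unique factorization; vertices $\Lambda^0$, range/source $r,s$, $v\Lambda$ the paths with range $v$; row-finite/source-free: paths of fixed degree and range form a finite/nonempty set. $C^*(\Lambda)$ is the universal $C^*$-algebra of a Cuntz–Krieger $\Lambda$-family. A $\Lambda$-semibranching function system on $(X,\mu)$: measurable $D_\lambda$, prefixing maps $\tau_\lambda:D_\lambda\to X$ with ranges $R_\lambda=\tau_\lambda(D_\lambda)$, coding maps $\tau^m$ such that for each $m\in\mathbb{N}^k$ $\{\tau_\lambda:d(\lambda)=m\}$ is a semibranching function system with coding map $\tau^m$ ($0<\mu(D_\lambda)<\infty$, ranges of finite measure, a.e. disjoint, covering $X$ a.e., $d(\mu\circ\tau_\lambda)/d\mu>0$ a.e., $\tau^m\circ\tau_\lambda=\mathrm{id}$), $\tau_v=\mathrm{id}$ for $v\in\Lambda^0$, $R_\nu\subseteq D_\lambda$ a.e. and $\tau_\lambda\tau_\nu=\tau_{\lambda\nu}$ a.e., $\tau^m\tau^n=\tau^{m+n}$. A $\Lambda$-projective representation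 arising from it: choose $f_\lambda\in L^2$ with $0\ne d(\mu\circ\tau_\lambda^{-1})/d\mu=|f_\lambda|^2$, $f_\lambda(f_\nu\circ\tau^{d(\lambda)})=f_{\lambda\nu}$, and set $T_\lambda f=f_\lambda\cdot(f\circ\tau^{d(\lambda)})$. A representation $\{t_\lambda\}$ on $\mathcal H$ is monic if all $t_\lambda\ne0$ and some $\xi$ satisfies $\overline{\mathrm{span}}\{t_\lambda t_\lambda^*\xi\}=\mathcal H$. *)

From HB Require Import structures.
From mathcomp Require Import all_boot all_order all_algebra.
From mathcomp Require Import all_classical all_reals all_analysis.
From mathcomp Require Import measurable_realfun complex.

Set Implicit Arguments.
Unset Strict Implicit.
Unset Printing Implicit Defensive.

Import Order.TTheory GRing.Theory Num.Theory.
Local Open Scope classical_set_scope.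
Local Open Scope ring_scope.

Definition degk (k : nat) := 'I_k -> nat.
Definition degk_add (k : nat) (m n : degk k) : degk k := fun i => (m i + n i)%N.
Definition degk0 (k : nat) : degk k := fun _ => 0%N.

(* A k-graph: a countable small category (objects = vertices, morphisms =
   paths) with a degree functor d : Lambda -> N^k having the unique
   factorization property.  [kg_comp l n] is the composite "l n" (meaningful
   when kg_src l = kg_rng n).  Vertices Lambda^0 are identified with the
   identity morphisms [kg_id v]. *)
Record kgraph (k : nat) := KGraph {
  kg_obj : countType;
  kg_mor :> countType;
  kg_rng : kg_mor -> kg_obj;
  kg_src : kg_mor -> kg_obj;
  kg_id : kg_obj -> kg_mor;
  kg_comp : kg_mor -> kg_mor -> kg_mor;
  kg_deg : kg_mor -> degk k;
  krng_id : forall v, kg_rng (kg_id v) = v;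
  ksrc_id : forall v, kg_src (kg_id v) = v;
  krng_comp : forall l n, kg_src l = kg_rng n -> kg_rng (kg_comp l n) = kg_rng l;
  ksrc_comp : forall l n, kg_src l = kg_rng n -> kg_src (kg_comp l n) = kg_src n;
  kcomp_idl : forall l, kg_comp (kg_id (kg_rng l)) l = l;
  kcomp_idr : forall l, kg_comp l (kg_id (kg_src l)) = l;
  kcompA : forall l n p, kg_src l = kg_rng n -> kg_src n = kg_rng p ->
    kg_comp l (kg_comp n p) = kg_comp (kg_comp l n) p;
  kdeg_id : forall v, kg_deg (kg_id v) = @degk0 k;
  kdeg_comp : forall l n, kg_src l = kg_rng n ->
    kg_deg (kg_comp l n) = degk_add (kg_deg l) (kg_deg n);
  kfactor : forall l (m n : degk k), kg_deg l = degk_add m n ->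
    exists! p : kg_mor * kg_mor,
      [/\ kg_src p.1 = kg_rng p.2, kg_comp p.1 p.2 = l, kg_deg p.1 = m & kg_deg p.2 = n]
}.

Definition row_finite (k : nat) (L : kgraph k) :=
  forall (v : kg_obj L) (m : degk k),
    finite_set [set l : L | kg_rng l = v /\ kg_deg l = m].

Definition source_free (k : nat) (L : kgraph k) :=
  forall (v : kg_obj L) (m : degk k),
    [set l : L | kg_rng l = v /\ kg_deg l = m] !=set0.

Section SBFS.
Context (k : nat) (L : kgraph k) (d : measure_display) (X : measurableType d)
  (R : realType) (mu : {measure set X -> \bar R}).

Definition sbfs_range (D : L -> set X) (tau : L -> X -> X) (l : L) : set X :=
  tau l @` D l.

(* D : domains, tau : prefixing maps, coding : coding maps tau^m *)
Definition Lambda_SBFS (D : L -> set X) (tau : L -> X -> X)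
    (coding : degk k -> X -> X) : Prop :=

  (forall l, [/\ measurable (D l), (0 < mu (D l))%E & (mu (D l) < +oo)%E]) /\

  (forall l, measurable_fun (D l) (tau l) /\
     forall A, measurable A -> A `<=` D l -> measurable (tau l @` A)) /\

  (forall l, (mu (sbfs_range D tau l) < +oo)%E) /\

  (forall m, measurable_fun setT (coding m)) /\

  (forall m (l n : L), kg_deg l = m -> kg_deg n = m -> l <> n ->
     mu (sbfs_range D tau l `&` sbfs_range D tau n) = 0%E) /\

  (forall m, mu.-negligible
     (~` \bigcup_(l in [set l : L | kg_deg l = m]) sbfs_range D tau l)) /\

  (forall l, exists h : X -> \bar R,
     [/\ measurable_fun (D l) h, (forall x, 0 <= h x)%E,
         {ae mu, forall x, D l x -> (0 < h x)%E} &
         forall A, measurable A -> A `<=` D l ->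
           mu (tau l @` A) = (\int[mu]_(x in A) h x)%E]) /\

  (forall l x, D l x -> coding (kg_deg l) (tau l x) = x) /\

  (forall (v : kg_obj L) x, D (kg_id v) x -> tau (kg_id v) x = x) /\

  (forall l n : L, kg_src l = kg_rng n ->
     mu.-negligible (sbfs_range D tau n `\` D l)) /\

  (* tau_l o tau_n = tau_{l n} a.e. (as partial maps) *)
  (forall l n : L, kg_src l = kg_rng n ->
     {ae mu, forall x,
        (D (kg_comp l n) x <-> (D n x /\ D l (tau n x))) /\
        (D (kg_comp l n) x -> tau l (tau n x) = tau (kg_comp l n) x)}) /\

  (forall m n, coding m \o coding n = coding (degk_add m n)).

Definition csq (z : complex R) : R := (complex.Re z) ^+ 2 + (complex.Im z) ^+ 2.

(* f is (a representative of) an element of L^2(X, mu) *)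
Definition L2 (f : X -> complex R) : Prop :=
  [/\ measurable_fun setT (fun x => complex.Re (f x)),
      measurable_fun setT (fun x => complex.Im (f x)) &
      (\int[mu]_x (csq (f x))%:E < +oo)%E].

Definition cinner (g h : X -> complex R) : complex R :=
  Complex (Rintegral mu setT (fun x => complex.Re (g x * conjc (h x))))
          (Rintegral mu setT (fun x => complex.Im (g x * conjc (h x)))).

Definition projT (coding : degk k -> X -> X) (f : L -> X -> complex R) (l : L)
    (g : X -> complex R) : X -> complex R :=
  fun x => f l x * g (coding (kg_deg l) x).

Definition arising_proj_rep (D : L -> set X) (tau : L -> X -> X)
    (coding : degk k -> X -> X) (f : L -> X -> complex R) : Prop :=
  [/\ (forall l, L2 (f l)),
      (forall l A, measurable A ->
         mu (D l `&` tau l @^-1` A) = (\int[mu]_(x in A) (csq (f l x))%:E)%E),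
      (forall l, ~ {ae mu, forall x, csq (f l x) = 0}) &
      (forall l n : L, kg_src l = kg_rng n ->
         {ae mu, forall x, f l x * f n (coding (kg_deg l) x) = f (kg_comp l n) x})].

(* eta is (a representative of) T_l^* xi : <T_l g, xi> = <g, eta> for all g *)
Definition is_adjoint_value (coding : degk k -> X -> X) (f : L -> X -> complex R)
    (l : L) (xi eta : X -> complex R) : Prop :=
  L2 eta /\ forall g, L2 g -> cinner (projT coding f l g) xi = cinner g eta.

(* The representation {T_l} on L^2(X, mu) is monic: all T_l are nonzero and
   there is xi with closed span{T_l T_l^* xi} = L^2(X, mu). *)
Definition monic_rep (coding : degk k -> X -> X) (f : L -> X -> complex R) : Prop :=
  (forall l, exists g, L2 g /\ ~ {ae mu, forall x, projT coding f l g x = 0}) /\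
  exists xi, L2 xi /\
  exists eta : L -> X -> complex R,
    (forall l, is_adjoint_value coding f l xi (eta l)) /\
    forall g, L2 g -> forall eps : R, 0 < eps ->
      exists s : seq (L * complex R),
        (\int[mu]_x (csq (g x - \sum_(p <- s) p.2 * projT coding f p.1 (eta p.1) x))%:E
          < eps%:E)%E.

End SBFS.

(* If [R_t = D_v] for every [t] in [v Lambda], then testing the adjoint relation
   [<T_t u, xi> = <u, T_t^* xi>] against indicators [u] of subsets of [D_t]
   (via the change of variables [x = tau_t y]) shows [T_t T_t^* xi = xi] a.e. on
   [D_v], because [f_t] vanishes only on a null subset of [R_t].  For paths [t]
   whose range is not [v], [f_t] vanishes on [D_v], since domains of distinct
   vertices are a.e. disjoint.  So every finite combination of the [T_t T_t^* xi]
   is a scalar multiple of [xi] on [D_v].  But [X_v] splits [D_v] into two parts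
   of positive measure, and the function equal to [zeta] on [X_v] and to [-zeta]
   on [D_v \ X_v], for a nonvanishing modification [zeta] of [xi], stays at
   positive distance from all such multiples. *)

From HB Require Import structures.
From mathcomp Require Import all_boot all_order all_algebra.
From mathcomp Require Import all_classical all_reals all_analysis.
From mathcomp Require Import measurable_realfun complex.
From mathcomp Require Import ring lra.

Set Implicit Arguments.
Unset Strict Implicit.
Unset Printing Implicit Defensive.

Import Order.TTheory GRing.Theory Num.Theory.
Local Open Scope classical_set_scope.
Local Open Scope ring_scope.

Section complex_arith.
Variable R : realType.
Implicit Types a b c w z : complex R.

Lemma ReD a b : complex.Re (a + b) = complex.Re a + complex.Re b.
Proof. by case: a b => ? ? []. Qed.

Lemma ImD a b : complex.Im (a + b) = complex.Im a + complex.Im b.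
Proof. by case: a b => ? ? []. Qed.

Lemma ReN a : complex.Re (- a) = - complex.Re a. Proof. by case: a. Qed.
Lemma ImN a : complex.Im (- a) = - complex.Im a. Proof. by case: a. Qed.
Lemma ReJ a : complex.Re (conjc a) = complex.Re a. Proof. by case: a. Qed.
Lemma ImJ a : complex.Im (conjc a) = - complex.Im a. Proof. by case: a. Qed.

Lemma ReM a b :
  complex.Re (a * b) = complex.Re a * complex.Re b - complex.Im a * complex.Im b.
Proof. by case: a b => ? ? []. Qed.

Lemma ImM a b :
  complex.Im (a * b) = complex.Re a * complex.Im b + complex.Im a * complex.Re b.
Proof. by case: a b => ? ? []. Qed.

Lemma csq_ge0 z : 0 <= csq z.
Proof. by rewrite addr_ge0 ?sqr_ge0. Qed.

Lemma csq_eq0 z : csq z = 0 -> z = 0.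
Proof.
case: z => a b /eqP; rewrite /csq /= paddr_eq0 ?sqr_ge0 // !sqrf_eq0.
by case/andP => /eqP -> /eqP ->.
Qed.

Lemma csqM a b : csq (a * b) = csq a * csq b.
Proof. by case: a b => ? ? [? ?]; rewrite /csq /=; ring. Qed.

Lemma csqN z : csq (- z) = csq z.
Proof. by case: z => ? ?; rewrite /csq /=; ring. Qed.

Lemma csq_real (r : R) : csq (Complex r 0) = r ^+ 2.
Proof. by rewrite /csq /= expr0n addr0. Qed.

Lemma normr_Re_mul_conj_le a b : `|complex.Re (a * conjc b)| <= csq a + csq b.
Proof.
case: a b => a1 a2 [b1 b2]; rewrite /csq /=.
have := sqr_ge0 (a1 - b1); have := sqr_ge0 (a2 - b2).
have := sqr_ge0 (a1 + b1); have := sqr_ge0 (a2 + b2).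
by rewrite ler_norml; move=> *; apply/andP; split; nra.
Qed.

Lemma Re_ReiM_eq0 w : complex.Re w = 0 -> complex.Re (Complex 0 1 * w) = 0 -> w = 0.
Proof. by case: w => w1 w2 /= h1 h2; apply/eqP; rewrite eq_complex /=; lra. Qed.

Lemma csq_le_csq_sub_mul z w c : (w = 0 \/ w = z) -> complex.Re c <= 0 ->
  csq z <= csq (z - c * w).
Proof.
case=> [->|->] Rec; first by rewrite mulr0 subr0.
rewrite -[X in X - _]mul1r -mulrBl csqM ler_peMl ?csq_ge0 //.
(* |1 - c| >= 1 - Re c >= 1 *)
by move: Rec; case: c => c1 c2 /= Rec; rewrite /csq /=; nra.
Qed.

End complex_arith.

Section complex_measurable.
Context d (X : measurableType d) (R : realType).
Variable mu : {measure set X -> \bar R}.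
Implicit Types a b h : X -> complex R.

Definition cmeasurable h :=
  measurable_fun setT (fun x => complex.Re (h x)) /\
  measurable_fun setT (fun x => complex.Im (h x)).

Lemma cmeasurable_cst (c : complex R) : cmeasurable (fun=> c).
Proof. by split; exact: measurable_cst. Qed.

Lemma cmeasurable_real (r : X -> R) : measurable_fun setT r ->
  cmeasurable (fun x => Complex (r x) 0).
Proof. by move=> mr; split => //=; exact: measurable_cst. Qed.

Lemma cmeasurableD a b : cmeasurable a -> cmeasurable b ->
  cmeasurable (fun x => a x + b x).
Proof.
move=> [ar ai] [br bi]; split.
  by under eq_fun do rewrite ReD; exact: measurable_funD.
by under eq_fun do rewrite ImD; exact: measurable_funD.
Qed.

Lemma cmeasurableN a : cmeasurable a -> cmeasurable (fun x => - a x).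
Proof.
move=> [ar ai]; split.
  by under eq_fun do rewrite ReN; exact: measurable_funN.
by under eq_fun do rewrite ImN; exact: measurable_funN.
Qed.

Lemma cmeasurableB a b : cmeasurable a -> cmeasurable b ->
  cmeasurable (fun x => a x - b x).
Proof. by move=> ma mb; apply: cmeasurableD => //; exact: cmeasurableN. Qed.

Lemma cmeasurableM a b : cmeasurable a -> cmeasurable b ->
  cmeasurable (fun x => a x * b x).
Proof.
move=> [ar ai] [br bi]; split.
  by under eq_fun do rewrite ReM; apply: measurable_funB; exact: measurable_funM.
by under eq_fun do rewrite ImM; apply: measurable_funD; exact: measurable_funM.
Qed.

Lemma cmeasurableJ a : cmeasurable a -> cmeasurable (fun x => conjc (a x)).
Proof.
move=> [ar ai]; split; first by under eq_fun do rewrite ReJ.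
by under eq_fun do rewrite ImJ; exact: measurable_funN.
Qed.

Lemma cmeasurable_comp h (t : X -> X) : cmeasurable h -> measurable_fun setT t ->
  cmeasurable (fun x => h (t x)).
Proof.
by move=> [hr hi] mt; split; [exact: (measurableT_comp hr mt)|exact: (measurableT_comp hi mt)].
Qed.

Lemma cmeasurable_sum (I : Type) (s : seq I) (F : I -> X -> complex R) :
  (forall i, cmeasurable (F i)) -> cmeasurable (fun x => \sum_(i <- s) F i x).
Proof.
move=> mF; elim: s => [|i s IH].
  by under eq_fun do rewrite big_nil; exact: cmeasurable_cst.
by under eq_fun do rewrite big_cons; exact: cmeasurableD.
Qed.

Lemma measurable_csq h : cmeasurable h -> measurable_fun setT (fun x => csq (h x)).
Proof. by move=> [hr hi]; apply: measurable_funD; exact: measurable_funX. Qed.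

Lemma emeasurable_csq h : cmeasurable h ->
  measurable_fun setT (fun x => (csq (h x))%:E).
Proof. by move=> mh; apply/measurable_EFinP; exact: measurable_csq. Qed.

Lemma L2_cmeasurable h : L2 mu h -> cmeasurable h.
Proof. by case. Qed.

Lemma L2_integral_lty h : L2 mu h -> (\int[mu]_x (csq (h x))%:E < +oo)%E.
Proof. by case. Qed.

Lemma L2_subset_integral_lty h (A : set X) : measurable A -> L2 mu h ->
  (\int[mu]_(x in A) (csq (h x))%:E < +oo)%E.
Proof.
move=> mA Lh; apply: le_lt_trans (L2_integral_lty Lh).
apply: ge0_subset_integral => //; last by move=> x _; rewrite lee_fin csq_ge0.
exact/emeasurable_csq/L2_cmeasurable.
Qed.

Lemma L2_integrable h : L2 mu h -> mu.-integrable setT (fun x => (csq (h x))%:E).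
Proof.
case=> mr mi h_fin; apply/integrableP; split; first exact: emeasurable_csq.
by under eq_integral do rewrite gee0_abs ?lee_fin ?csq_ge0 //.
Qed.

Lemma L2_le h (G : X -> \bar R) : cmeasurable h -> mu.-integrable setT G ->
  (forall x, (csq (h x))%:E <= `|G x|)%E -> L2 mu h.
Proof.
move=> mh iG hG; have [mr mi] := mh; split => //.
have /integrableP [_] : mu.-integrable setT (fun x => (csq (h x))%:E).
  apply: (le_integrable measurableT _ _ iG); first exact: emeasurable_csq.
  by move=> x _; rewrite gee0_abs ?lee_fin ?csq_ge0.
by under eq_integral do rewrite gee0_abs ?lee_fin ?csq_ge0 //.
Qed.

Lemma L2_mul_bounded h (k : X -> complex R) (M : R) :
  L2 mu h -> cmeasurable k -> 0 <= M -> (forall x, csq (k x) <= M) ->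
  L2 mu (fun x => k x * h x).
Proof.
move=> Lh mk M0 kM.
apply: L2_le (cmeasurableM mk (L2_cmeasurable Lh))
  (integrableZl measurableT M (L2_integrable Lh)) _ => x.
rewrite -EFinM abse_EFin lee_fin csqM ger0_norm ?mulr_ge0 ?csq_ge0 //.
by rewrite ler_wpM2r ?csq_ge0.
Qed.

Lemma L2_indic (A : set X) : measurable A -> (mu A < +oo)%E ->
  L2 mu (fun x => Complex (\1_A x) 0).
Proof.
move=> mA muA; split => /=; [exact: measurable_indic|exact: measurable_cst|].
rewrite (_ : (fun x => _) = (fun x => (\1_A x)%:E)); last first.
  apply/funext => x; rewrite csq_real indicE.
  by case: (x \in A); rewrite ?expr1n ?expr0n.
by rewrite integral_indic // setIT.
Qed.

Lemma L2D a b : L2 mu a -> L2 mu b -> L2 mu (fun x => a x + b x).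
Proof.
move=> La Lb; have m2 h (Lh : L2 mu h) := integrableZl measurableT 2 (L2_integrable Lh).
apply: L2_le (cmeasurableD (L2_cmeasurable La) (L2_cmeasurable Lb))
  (integrableD measurableT (m2 _ La) (m2 _ Lb)) _ => x /=.
rewrite lee_fin ger0_norm ?addr_ge0 ?mulr_ge0 ?csq_ge0 //.
case: (a x) (b x) => a1 a2 [b1 b2]; rewrite /csq /=.
by have := sqr_ge0 (a1 - b1); have := sqr_ge0 (a2 - b2); nra.
Qed.

Lemma L2N a : L2 mu a -> L2 mu (fun x => - a x).
Proof.
move=> La; apply: L2_le (cmeasurableN (L2_cmeasurable La)) (L2_integrable La) _ => x.
by rewrite csqN gee0_abs ?lee_fin ?csq_ge0.
Qed.

Lemma L2B a b : L2 mu a -> L2 mu b -> L2 mu (fun x => a x - b x).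
Proof. by move=> La Lb; exact: L2D La (L2N Lb). Qed.

Lemma integrable_Re_mul_conj a b : L2 mu a -> L2 mu b ->
  mu.-integrable setT (EFin \o (fun x => complex.Re (a x * conjc (b x)))).
Proof.
move=> La Lb.
have [mRe _] := cmeasurableM (L2_cmeasurable La) (cmeasurableJ (L2_cmeasurable Lb)).
apply: (le_integrable measurableT _ _
  (integrableD measurableT (L2_integrable La) (L2_integrable Lb))).
  exact/measurable_EFinP.
move=> x _ /=; rewrite lee_fin.
by rewrite [leRHS]ger0_norm ?normr_Re_mul_conj_le // addr_ge0 ?csq_ge0.
Qed.

End complex_measurable.

Section positive_integrand.
Local Open Scope ereal_scope.
Context d (X : measurableType d) (R : realType).
Variable mu : {measure set X -> \bar R}.
Implicit Types (A B D : set X) (F G : X -> R).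

Lemma integral_pos_eq0_null B G : measurable B -> measurable_fun setT G ->
  (forall x, B x -> (0 < G x)%R) -> \int[mu]_(x in B) (G x)%:E = 0 -> mu B = 0.
Proof.
move=> mB mG Gpos I0.
have : \int[mu]_(x in B) `|(G x)%:E| = 0.
  rewrite -I0; apply: eq_integral => x /[!inE] Bx.
  by rewrite gee0_abs // lee_fin ltW // Gpos.
have mEG : measurable_fun setT (EFin \o G) by exact/measurable_EFinP.
move/(ae_eq_integral_abs mu mB (measurable_funTS mEG)).
move=> [N [mN N0 sN]]; apply/eqP; rewrite -measure_le0 -N0 le_measure ?inE //.
move=> x Bx; apply: sN => /(_ Bx) /= /eqP.
by rewrite eqe gt_eqF // Gpos.
Qed.

Lemma integral_pos_gt0 A G : measurable A -> measurable_fun setT G ->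
  (forall x, A x -> (0 < G x)%R) -> 0 < mu A -> 0 < \int[mu]_(x in A) (G x)%:E.
Proof.
move=> mA mG Gpos muA.
rewrite lt_neqAle integral_ge0 ?andbT; last by move=> x Ax; rewrite lee_fin ltW // Gpos.
by apply/eqP => /esym /(integral_pos_eq0_null mA mG Gpos) A0; rewrite A0 ltxx in muA.
Qed.

Lemma ae_le_subset_integral A G F : measurable A ->
  measurable_fun setT G -> measurable_fun setT F ->
  (forall x, 0 <= G x)%R -> (forall x, 0 <= F x)%R ->
  {ae mu, forall x, A x -> (G x <= F x)%R} ->
  \int[mu]_(x in A) (G x)%:E <= \int[mu]_x (F x)%:E.
Proof.
move=> mA mG mF G0 F0 GF.
have mEF : measurable_fun setT (EFin \o F) by exact/measurable_EFinP.
apply: (@le_trans _ _ (\int[mu]_(x in A) (F x)%:E)).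
- apply: ae_ge0_le_integral => //.
  + by move=> x _; rewrite lee_fin.
  + exact/measurable_funTS/measurable_EFinP.
  + by move=> x _; rewrite lee_fin.
  + exact: measurable_funTS.
- by apply: ge0_subset_integral => // x _; rewrite lee_fin.
Qed.

Lemma integral_eq_of_Rintegral_eq F G :
  mu.-integrable setT (EFin \o F) -> mu.-integrable setT (EFin \o G) ->
  Rintegral mu setT F = Rintegral mu setT G ->
  \int[mu]_x (F x)%:E = \int[mu]_x (G x)%:E.
Proof.
move=> iF iG FG.
rewrite -(fineK (integrable_fin_num measurableT iF)).
by rewrite -(fineK (integrable_fin_num measurableT iG)) -/(Rintegral _ _ _) FG.
Qed.

Lemma integral_indic_mkcond B F :
  \int[mu]_x (F x * \1_B x)%:E = \int[mu]_(x in B) (F x)%:E.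
Proof.
by rewrite [RHS]integral_mkcond epatch_indic; apply: eq_integral => x _; rewrite EFinM.
Qed.

End positive_integrand.

Section change_of_variables.
Local Open Scope ereal_scope.
Context d (X : measurableType d) (R : realType).
Variable mu : {measure set X -> \bar R}.
Variables (D : set X) (t : X -> X) (g : X -> R).
Hypotheses (mD : measurable D) (mt : measurable_fun D t).
Hypotheses (g0 : forall x, (0 <= g x)%R) (mg : measurable_fun setT g).
Hypothesis image_density : forall A, measurable A ->
  mu (D `&` t @^-1` A) = \int[mu]_(x in A) (g x)%:E.

Import HBNNSimple.

Lemma integral_comp_indic (A : set X) : measurable A ->
  \int[mu]_(x in D) (\1_A (t x))%:E = \int[mu]_x ((\1_A x)%:E * (g x)%:E).
Proof.
move=> mA; have mDA : measurable (D `&` t @^-1` A) by exact: mt.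
transitivity (\int[mu]_(x in D) (\1_(D `&` t @^-1` A) x)%:E).
  apply: eq_integral => x /[!inE] Dx; rewrite !indicE.
  suff -> : (x \in D `&` t @^-1` A) = (t x \in A) by [].
  by apply/idP/idP => /[!inE]; [case|move=> ?; split].
rewrite integral_indic // setIAC setIid image_density // integral_mkcond.
by apply: eq_integral => x _; rewrite epatch_indic /= muleC.
Qed.

Lemma integral_comp_nnsfun (h : {nnsfun X >-> R}) :
  \int[mu]_(x in D) (h (t x))%:E = \int[mu]_x ((h x)%:E * (g x)%:E).
Proof.
pose ind r x : R := \1_(h @^-1` [set r]) x.
have mind r : measurable_fun setT (ind r) by exact/measurable_indic/measurable_funPTI.
have mindt r : measurable_fun D (ind r \o t) by exact: measurableT_comp (mind r) mt.
have mEind (r : R) : measurable_fun setT (fun x => (r * ind r x)%:E * (g x)%:E).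
  apply: emeasurable_funM; apply/measurable_EFinP; last exact: mg.
  by apply: measurable_funM; [exact: measurable_cst|exact: mind].
have mEindt (r : R) : measurable_fun D (fun x => (r * ind r (t x))%:E).
  apply/measurable_EFinP/measurable_funM; [exact: measurable_cst|exact: mindt].
have ind_ge0 r x : 0 <= (r * ind r x)%:E by rewrite EFinM; exact: nnfun_muleindic_ge0.
have hE x : (h x)%:E = \sum_(r \in range h) (r * ind r x)%:E.
  by rewrite fimfunE fsumEFin.
under eq_integral do rewrite hE.
under [RHS]eq_integral do rewrite hE ge0_mule_fsuml //.
rewrite !ge0_integral_fsum //; last by move=> r x _; rewrite mule_ge0 ?ind_ge0 ?lee_fin.
apply: eq_fsbigr => r /[!inE] -[x _ <-].
under eq_integral do rewrite EFinM.
under [RHS]eq_integral do rewrite EFinM -muleA.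
rewrite !ge0_integralZl_EFin // ?integral_comp_indic //.
- by move=> y _; rewrite mule_ge0 ?lee_fin.
- by apply: emeasurable_funM; apply/measurable_EFinP; [exact: mind|exact: mg].
- by move=> y _; rewrite lee_fin.
- exact/measurable_EFinP/mindt.
Qed.

Lemma ge0_integral_comp (F : X -> \bar R) :
  (forall x, 0 <= F x) -> measurable_fun setT F ->
  \int[mu]_(x in D) F (t x) = \int[mu]_x (F x * (g x)%:E).
Proof.
move=> F0 mF; pose h := nnsfun_approx measurableT mF.
have h_cvg x : (h n x)%:E @[n --> \oo] --> F x.
  exact: (cvg_nnsfun_approx measurableT mF (fun x _ => F0 x) Logic.I).
have h_nd x a b : (a <= b)%N -> ((h a x)%:E <= (h b x)%:E).
  by move=> ab; rewrite lee_fin; exact/lefP/nd_nnsfun_approx.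
transitivity (limn (fun n => \int[mu]_(x in D) (h n (t x))%:E)).
- rewrite -monotone_convergence//.
  + by apply: eq_integral => x _; apply/esym; apply: cvg_lim => //; exact: h_cvg.
  + by move=> n; exact/measurable_EFinP/(measurableT_comp (measurable_funPT _) mt).
  + by move=> n x _; rewrite lee_fin.
  + by move=> x _; exact: h_nd.
- under eq_fun do rewrite integral_comp_nnsfun.
  rewrite -monotone_convergence//.
  + by apply: eq_integral => x _; apply: cvg_lim => //; exact: cvgeZr (h_cvg x).
  + by move=> n; apply: emeasurable_funM; exact/measurable_EFinP.
  + by move=> n x _; rewrite mule_ge0 ?lee_fin.
  + by move=> x _ a b ab; rewrite lee_wpmul2r ?lee_fin //; exact: h_nd.
Qed.

Lemma integral_comp (F : X -> R) : measurable_fun setT F ->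
  \int[mu]_(x in D) (F (t x))%:E = \int[mu]_x ((g x * F x)%:E).
Proof.
move=> mF; have mEF : measurable_fun setT (EFin \o F) by exact/measurable_EFinP.
have gF_pos : (fun x => (g x * F x)%:E)^\+ = (fun x => (EFin \o F)^\+ x * (g x)%:E).
  apply/funext => x; rewrite funeposE EFinM.
  by rewrite -(funeposE (fun y => (g x)%:E * (F y)%:E)) ge0_funeposM // muleC.
have gF_neg : (fun x => (g x * F x)%:E)^\- = (fun x => (EFin \o F)^\- x * (g x)%:E).
  apply/funext => x; rewrite funenegE EFinM.
  by rewrite -(funenegE (fun y => (g x)%:E * (F y)%:E)) ge0_funenegM // muleC.
have Ft_pos : (fun x => (F (t x))%:E)^\+ = (EFin \o F)^\+ \o t.
  by rewrite -funepos_comp.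
have Ft_neg : (fun x => (F (t x))%:E)^\- = (EFin \o F)^\- \o t.
  by rewrite -funeneg_comp.
rewrite integralE [RHS]integralE gF_pos gF_neg Ft_pos Ft_neg.
rewrite !ge0_integral_comp //.
- exact: measurable_funeneg.
- exact: measurable_funepos.
Qed.

End change_of_variables.

Section semibranching.
Context (k : nat) (L : kgraph k) (d : measure_display) (X : measurableType d)
  (R : realType) (mu : {measure set X -> \bar R})
  (D : L -> set X) (tau : L -> X -> X) (coding : degk k -> X -> X).
Hypothesis sbfs : Lambda_SBFS mu D tau coding.
Variable f : L -> X -> complex R.
Hypothesis frep : arising_proj_rep mu D tau coding f.

Local Notation range := (sbfs_range D tau).

Lemma sbfs_dom l : [/\ measurable (D l), (0 < mu (D l))%E & (mu (D l) < +oo)%E].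
Proof. by have [H _] := sbfs; exact: H. Qed.

Lemma measurable_dom l : measurable (D l). Proof. by case: (sbfs_dom l). Qed.

Lemma measurable_tau l : measurable_fun (D l) (tau l).
Proof. by have [_ [H _]] := sbfs; case: (H l). Qed.

Lemma measurable_image_tau l A : measurable A -> A `<=` D l -> measurable (tau l @` A).
Proof. by have [_ [H _]] := sbfs; case: (H l) => _; exact. Qed.

Lemma measurable_range l : measurable (range l).
Proof. exact: measurable_image_tau (measurable_dom l) (@subset_refl _ _). Qed.

Lemma measurable_coding m : measurable_fun setT (coding m).
Proof. by have [_ [_ [_ [H _]]]] := sbfs; exact: H. Qed.

Lemma range_disjoint m (l n : L) : kg_deg l = m -> kg_deg n = m -> l <> n ->
  mu (range l `&` range n) = 0%E.
Proof. by have [_ [_ [_ [_ [H _]]]]] := sbfs; exact: H. Qed.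

Lemma tau_image_density l : exists h : X -> \bar R,
  [/\ measurable_fun (D l) h, (forall x, 0 <= h x)%E,
      {ae mu, forall x, D l x -> (0 < h x)%E} &
      forall A, measurable A -> A `<=` D l ->
        mu (tau l @` A) = (\int[mu]_(x in A) h x)%E].
Proof. by have [_ [_ [_ [_ [_ [_ [H _]]]]]]] := sbfs; exact: H. Qed.

Lemma coding_tauK l x : D l x -> coding (kg_deg l) (tau l x) = x.
Proof. by have [_ [_ [_ [_ [_ [_ [_ [H _]]]]]]]] := sbfs; exact: H. Qed.

Lemma tau_vertex v x : D (kg_id v) x -> tau (kg_id v) x = x.
Proof. by have [_ [_ [_ [_ [_ [_ [_ [_ [H _]]]]]]]]] := sbfs; exact: H. Qed.

Lemma range_subset_dom_ae (l n : L) : kg_src l = kg_rng n ->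
  mu.-negligible (range n `\` D l).
Proof. by have [_ [_ [_ [_ [_ [_ [_ [_ [_ [H _]]]]]]]]]] := sbfs; exact: H. Qed.

Lemma L2_f l : L2 mu (f l). Proof. by case: frep. Qed.

Lemma csq_f_density l A : measurable A ->
  mu (D l `&` tau l @^-1` A) = (\int[mu]_(x in A) (csq (f l x))%:E)%E.
Proof. by case: frep => _ H _ _; exact: H. Qed.

Lemma coding_on_range l x : range l x ->
  D l (coding (kg_deg l) x) /\ tau l (coding (kg_deg l) x) = x.
Proof. by case=> y Dy <-; rewrite coding_tauK. Qed.

Lemma cmeasurable_projT l g : cmeasurable g -> cmeasurable (projT coding f l g).
Proof.
move=> mg; apply: cmeasurableM; first exact/L2_cmeasurable/L2_f.
exact/cmeasurable_comp/measurable_coding.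
Qed.

Lemma L2_projT l g : L2 mu g -> L2 mu (projT coding f l g).
Proof.
move=> Lg; have mg := L2_cmeasurable Lg.
have [mr mi] := cmeasurable_projT l mg.
split => //; rewrite /projT.
have mgc : measurable_fun setT (fun x => (csq (g (coding (kg_deg l) x)))%:E).
  exact/emeasurable_csq/cmeasurable_comp/measurable_coding.
have gc_ge0 x : (0 <= (csq (g (coding (kg_deg l) x)))%:E)%E by rewrite lee_fin csq_ge0.
under eq_integral do rewrite csqM EFinM muleC.
rewrite -(ge0_integral_comp (measurable_dom l) (@measurable_tau l) (fun x => csq_ge0 (f l x))
  (measurable_csq (L2_cmeasurable (L2_f l))) (csq_f_density l) gc_ge0 mgc).
under eq_integral => x /[!inE] Dx do rewrite coding_tauK //.
exact: L2_subset_integral_lty (measurable_dom l) Lg.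
Qed.

Lemma f_eq0_off_range l : {ae mu, forall x, ~ range l x -> f l x = 0}.
Proof.
have mC := measurableC (measurable_range l).
have I0 : (\int[mu]_(x in ~` range l) `|(csq (f l x))%:E| = 0)%E.
  under eq_integral do rewrite gee0_abs ?lee_fin ?csq_ge0 //.
  rewrite -csq_f_density // (_ : _ `&` _ = set0) ?measure0 //.
  by apply/seteqP; split => x // [Dx /= nR]; apply: nR; exists x.
have mf := emeasurable_csq (L2_cmeasurable (L2_f l)).
move: I0 => /(ae_eq_integral_abs mu mC (measurable_funTS mf)).
by apply: filterS => x fx0 nR; apply: csq_eq0; case: (fx0 nR).
Qed.

(* The zeros of [f_l] in [R_l] form [tau_l] of a [mu]-null subset of [D_l]
   (by [csq_f_density]), and [tau_l] maps null sets to null sets. *)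
Lemma f_neq0_on_range l : {ae mu, forall x, range l x -> f l x != 0}.
Proof.
pose Z := range l `&` [set x | csq (f l x) = 0].
have mZ : measurable Z.
  apply: measurableI; first exact: measurable_range.
  have := measurable_csq (L2_cmeasurable (L2_f l)) measurableT (measurable_set1 0).
  by rewrite setTI.
have mZ' : measurable (D l `&` tau l @^-1` Z).
  exact: (@measurable_tau l (measurable_dom l) _ mZ).
have Z'0 : mu (D l `&` tau l @^-1` Z) = 0%E.
  by rewrite csq_f_density //; apply: integral0_eq => x [_ /= ->].
have [h [mh h0 _ Hh]] := tau_image_density l.
exists (tau l @` (D l `&` tau l @^-1` Z)); split.
- exact: measurable_image_tau mZ' (@subIsetl _ _ _).
- rewrite (Hh _ mZ' (@subIsetl _ _ _)).
  under eq_integral do rewrite -[h _]gee0_abs //.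
  apply: integral_abs_eq0 => //.
  exact: measurable_funS (measurable_dom l) (@subIsetl _ _ _) mh.
- move=> x /= /not_implyP [Rx /negP /negbNE /eqP fx0].
  have [Dc tc] := coding_on_range Rx.
  exists (coding (kg_deg l) x) => //; split => //=.
  by rewrite tc; split => //=; rewrite fx0 csq_real expr0n.
Qed.

Lemma range_vertex w : range (kg_id w) = D (kg_id w).
Proof.
apply/seteqP; split => x; first by case=> y Dy <-; rewrite tau_vertex.
by move=> Dx; exists x => //; rewrite tau_vertex.
Qed.

Lemma vertex_dom_disjoint w v : w <> v -> mu (D (kg_id w) `&` D (kg_id v)) = 0%E.
Proof.
move=> wv; rewrite -!range_vertex.
apply: (@range_disjoint (@degk0 k)); rewrite ?kdeg_id //.
by move=> /(congr1 (@kg_rng _ _)); rewrite !krng_id.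
Qed.

Lemma f_eq0_on_vertex l v : kg_rng l <> v ->
  {ae mu, forall x, D (kg_id v) x -> f l x = 0}.
Proof.
move=> lv.
have Rl_sub : {ae mu, forall x, ~ (range l `\` D (kg_id (kg_rng l))) x}.
  have := @range_subset_dom_ae (kg_id (kg_rng l)) l (ksrc_id _).
  by apply: negligibleS => x /= /contrapT.
have disj : {ae mu, forall x, ~ (D (kg_id (kg_rng l)) `&` D (kg_id v)) x}.
  have : mu.-negligible (D (kg_id (kg_rng l)) `&` D (kg_id v)).
    apply/negligibleP; last exact: vertex_dom_disjoint.
    by apply: measurableI; exact: measurable_dom.
  by apply: negligibleS => x /= /contrapT.
apply: filterS (filterI (filterI (f_eq0_off_range l) Rl_sub) disj).
move=> x [[fx0 Rx] Dx] Dvx; apply: fx0 => Rlx; apply: Dx; split => //.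
by apply: contrapT => nD; apply: Rx.
Qed.

Section adjoint.
Variables (l : L) (xi eta : X -> complex R).
Hypotheses (Lxi : L2 mu xi) (adj : is_adjoint_value mu coding f l xi eta).

Local Notation T := (projT coding f l).
Local Notation cd := (coding (kg_deg l)).

Let Leta : L2 mu eta. Proof. by case: adj. Qed.

Let L2_cf c : L2 mu (fun x => c * f l x).
Proof.
exact: L2_mul_bounded (L2_f l) (cmeasurable_cst X c) (csq_ge0 c) (fun=> lexx _).
Qed.

Section indicator_test_function.
Variables (c : complex R) (B : set X).
Hypotheses (mB : measurable B) (B_range : B `<=` range l).

Let C := D l `&` tau l @^-1` B.
Let u y := c * Complex (\1_C y) 0.

Let mC : measurable C.
Proof. exact: (measurable_tau (measurable_dom l) mB). Qed.

Let L2_u : L2 mu u.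
Proof.
have muC : (mu C < +oo)%E.
  have [mDl _ muDl] := sbfs_dom l.
  by apply: le_lt_trans muDl; apply: le_measure; rewrite ?inE //; exact: subIsetl.
exact: L2_mul_bounded (L2_indic mC muC) (cmeasurable_cst _ c) (csq_ge0 c) (fun=> lexx _).
Qed.

Let indic_C_coding x : range l x -> \1_C (cd x) = \1_B x :> R.
Proof.
move=> /coding_on_range [Dc tc]; rewrite !indicE.
congr (_ : bool)%:R; apply/idP/idP; rewrite !inE /C.
  by case=> _ /=; rewrite tc.
by move=> Bx; split => //=; rewrite tc.
Qed.

Lemma inner_projT_indic :
  (\int[mu]_x (complex.Re (T u x * conjc (xi x)))%:E =
   \int[mu]_(x in B) (complex.Re (c * (f l x * conjc (xi x))))%:E)%E.
Proof.
have mxi := L2_cmeasurable Lxi.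
have mf := L2_cmeasurable (L2_f l).
rewrite -[RHS]integral_indic_mkcond; apply: ae_eq_integral => //.
- apply/measurable_EFinP; case: (cmeasurableM (L2_cmeasurable (L2_projT l L2_u))
    (cmeasurableJ mxi)) => //.
- apply/measurable_EFinP/measurable_funM; last exact: measurable_indic.
  by case: (cmeasurableM (cmeasurable_cst X c) (cmeasurableM mf (cmeasurableJ mxi))).
- apply: filterS (f_eq0_off_range l) => x fx0 _.
  case: (pselect (range l x)) => [Rx|nRx].
    rewrite /projT /u -indic_C_coding //.
    by congr (_%:E); case: (c) (f l x) (xi x) => ? ? [? ?] [? ?] /=; ring.
  rewrite /projT fx0 // !mul0r indicE memNset ?mulr0 //.
  by move/B_range.
Qed.

Lemma inner_indic_adjoint :
  (\int[mu]_x (complex.Re (u x * conjc (eta x)))%:E =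
   \int[mu]_(x in B) (complex.Re (c * (f l x * conjc (T eta x))))%:E)%E.
Proof.
have mDl := measurable_dom l.
have mf := L2_cmeasurable (L2_f l).
pose G x := \1_B x * complex.Re (c * conjc (eta (cd x))).
have mG : measurable_fun setT G.
  apply: measurable_funM; first exact: measurable_indic.
  have mec := cmeasurable_comp (L2_cmeasurable Leta) (measurable_coding (kg_deg l)).
  by case: (cmeasurableM (cmeasurable_cst X c) (cmeasurableJ mec)).
transitivity (\int[mu]_(y in D l) (G (tau l y))%:E)%E.
  rewrite [RHS]integral_mkcond; apply: eq_integral => y _.
  rewrite patchE; case: ifPn => [/[1!inE] Dy|nDy].
    rewrite /G (coding_tauK Dy) /u indicE /C.
    suff -> : (y \in D l `&` tau l @^-1` B) = (tau l y \in B).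
      by case: (c) (eta y) => ? ? [? ?] /=; congr (_%:E); ring.
    by apply/idP/idP => /set_mem; [case=> _ /mem_set|move=> ?; apply/mem_set].
  rewrite /u indicE memNset; last by case=> Dy _; rewrite mem_set in nDy.
  by case: (c) (eta y) => ? ? [? ?] /=; rewrite !(mulr0, mul0r, subr0, addr0).
rewrite (integral_comp mDl (@measurable_tau l) (fun x => csq_ge0 (f l x))
  (measurable_csq mf) (csq_f_density l) mG) -[RHS]integral_indic_mkcond.
apply: eq_integral => x _; rewrite /G /projT; congr (_%:E).
by case: (c) (f l x) (eta _) => ? ? [? ?] [? ?]; rewrite /csq /=; ring.
Qed.

Lemma integral_Re_f_conj_adjoint_defect :
  (\int[mu]_(x in B) (complex.Re (c * (f l x * conjc (xi x - T eta x))))%:E = 0)%E.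
Proof.
have LTeta := L2_projT l Leta.
pose P x := complex.Re (c * (f l x * conjc (xi x))).
pose Q x := complex.Re (c * (f l x * conjc (T eta x))).
have iP : mu.-integrable B (EFin \o P).
  apply: integrableS measurableT mB (@subsetT _ _) _.
  have := integrable_Re_mul_conj (L2_cf c) Lxi; congr (_.-integrable _ _).
  by apply/funext => x; rewrite /= /P mulrA.
have iQ : mu.-integrable B (EFin \o Q).
  apply: integrableS measurableT mB (@subsetT _ _) _.
  have := integrable_Re_mul_conj (L2_cf c) LTeta; congr (_.-integrable _ _).
  by apply/funext => x; rewrite /= /Q mulrA.
have PQ : (\int[mu]_(x in B) (P x)%:E = \int[mu]_(x in B) (Q x)%:E)%E.
  rewrite -inner_projT_indic // -inner_indic_adjoint //.
  apply: integral_eq_of_Rintegral_eq.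
  - exact: integrable_Re_mul_conj (L2_projT l L2_u) Lxi.
  - exact: integrable_Re_mul_conj L2_u Leta.
  - by have := congr1 (@complex.Re R) (adj.2 _ L2_u).
under eq_integral do rewrite rmorphB mulrBr mulrBr ReD ReN EFinB.
rewrite integralB_EFin // PQ subee //.
exact: integrable_fin_num iQ.
Qed.

End indicator_test_function.

Lemma projT_adjoint_eq_on_range : {ae mu, forall x, range l x -> T eta x = xi x}.
Proof.
have Ldefect := L2B Lxi (L2_projT l Leta).
have mR := measurable_range l.
have defect0 c : {ae mu, forall x, range l x ->
    complex.Re (c * (f l x * conjc (xi x - T eta x))) = 0}.
  have idefect : mu.-integrable (range l)
      (EFin \o (fun x => complex.Re (c * (f l x * conjc (xi x - T eta x))))).
    apply: integrableS measurableT mR (@subsetT _ _) _.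
    have := integrable_Re_mul_conj (L2_cf c) Ldefect; congr (_.-integrable _ _).
    by apply/funext => x; rewrite /= mulrA.
  have := integral_ae_eq mR idefect (measurable_cst 0%E) (fun B BR mB =>
    etrans (integral_Re_f_conj_adjoint_defect c mB BR) (esym (integral0 _ _))).
  by apply: filterS => x /[apply] /= -[].
apply: filterS (filterI (filterI (defect0 1) (defect0 (Complex 0 1)))
  (f_neq0_on_range l)) => x [[Rex Imx] fx0] Rx.
apply/esym/eqP; rewrite -subr_eq0 -conjc_eq0.
have := Rex Rx; rewrite mul1r => /Re_ReiM_eq0 /(_ (Imx Rx)) /eqP.
by rewrite mulf_eq0 (negbTE (fx0 Rx)).
Qed.

End adjoint.

Section vertex.
Variables (v : kg_obj L) (xi : X -> complex R) (eta : L -> X -> complex R).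
Hypothesis range_v : forall t : L, kg_rng t = v -> range t = D (kg_id v).
Hypotheses (Lxi : L2 mu xi) (adj : forall l, is_adjoint_value mu coding f l xi (eta l)).

Lemma projT_adjoint_on_vertex l : exists c : complex R,
  {ae mu, forall x, D (kg_id v) x -> projT coding f l (eta l) x = c * xi x}.
Proof.
have [lv|lv] := pselect (kg_rng l = v).
  exists 1; have := projT_adjoint_eq_on_range Lxi (adj l).
  by apply: filterS => x Tx Dx; rewrite mul1r Tx // range_v.
exists 0; apply: filterS (f_eq0_on_vertex lv) => x fx0 Dx.
by rewrite /projT fx0 // !mul0r.
Qed.

Lemma span_projT_adjoint_on_vertex (s : seq (L * complex R)) : exists c : complex R,
  {ae mu, forall x, D (kg_id v) x ->
    \sum_(p <- s) p.2 * projT coding f p.1 (eta p.1) x = c * xi x}.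
Proof.
elim: s => [|[l a] s [c IH]].
  by exists 0; apply: aeW => x _; rewrite big_nil mul0r.
have [cl Hl] := projT_adjoint_on_vertex l.
exists (a * cl + c); apply: filterS (filterI Hl IH) => x [Tx Sx] Dx.
by rewrite big_cons /= Tx // Sx // mulrDl mulrA.
Qed.

End vertex.

End semibranching.

Lemma measureD_gt0 d (X : measurableType d) (R : realType)
    (mu : {measure set X -> \bar R}) (A D : set X) :
  measurable A -> measurable D -> A `<=` D -> (mu A < mu D)%E -> (0 < mu (D `\` A))%E.
Proof.
move=> mA mD AD muAD; rewrite lt0e measure_ge0 andbT.
apply: contraTneq muAD => DA0; rewrite -leNgt.
have disj : A `&` (D `\` A) = set0 by rewrite setDIK.
rewrite -[in leLHS](setDUK AD) (measureU mu mA (measurableD mD mA) disj).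
by move: DA0 => /= ->; rewrite addr0.
Qed.

Section far_from_multiples.
Context d (X : measurableType d) (R : realType).
Variable mu : {measure set X -> \bar R}.
Variables (D : set X) (xi : X -> complex R).
Hypotheses (mD : measurable D) (muD : (mu D < +oo)%E) (Lxi : L2 mu xi).

Lemma L2_nonvanishing_modification : exists zeta : X -> complex R,
  [/\ L2 mu zeta, forall x, D x -> zeta x != 0 &
      forall x, D x -> xi x = 0 \/ xi x = zeta x].
Proof.
pose Z := D `&` [set x | csq (xi x) = 0].
have mZ : measurable Z.
  apply: measurableI => //.
  by have := measurable_csq (L2_cmeasurable Lxi) measurableT (measurable_set1 0); rewrite setTI.
have muZ : (mu Z < +oo)%E.
  by apply: le_lt_trans muD; apply: le_measure; rewrite ?inE //; exact: subIsetl.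
exists (fun x => xi x + Complex (\1_Z x) 0); split.
- exact: L2D Lxi (L2_indic mZ muZ).
- move=> x Dx; rewrite indicE; have [xi0|xi_neq0] := eqVneq (xi x) 0.
    rewrite mem_set; last by split => //=; rewrite xi0 csq_real expr0n.
    rewrite xi0 add0r; apply/eqP => /(congr1 (@complex.Re R)) /=.
    by apply/eqP; rewrite oner_eq0.
  rewrite memNset ?addr0 // => -[_ /= /csq_eq0 xi0].
  by rewrite xi0 eqxx in xi_neq0.
- move=> x Dx; have [xi0|xi_neq0] := eqVneq (xi x) 0; [by left|right].
  rewrite indicE memNset ?addr0 // => -[_ /= /csq_eq0 xi0].
  by rewrite xi0 eqxx in xi_neq0.
Qed.

Lemma L2_sign_flip (zeta : X -> complex R) (A : set X) : L2 mu zeta -> measurable A ->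
  exists g : X -> complex R, [/\ L2 mu g, forall x, A x -> g x = zeta x &
    forall x, ~ A x -> g x = - zeta x].
Proof.
move=> Lzeta mA; pose sgn x : complex R := Complex (2 * \1_A x - 1) 0.
have msgn : cmeasurable sgn.
  apply/cmeasurable_real/measurable_funB; last exact: measurable_cst.
  by apply: measurable_funM; [exact: measurable_cst|exact: measurable_indic].
exists (fun x => sgn x * zeta x); split.
- apply: L2_mul_bounded Lzeta msgn ler01 _ => x.
  by rewrite csq_real indicE; case: (x \in A); rewrite /=; lra.
- move=> x Ax; rewrite /sgn indicE mem_set // mulr1.
  rewrite (_ : Complex _ _ = 1) ?mul1r //; apply/eqP.
  by rewrite eq_complex /= eqxx andbT; apply/eqP; ring.
- move=> x nAx; rewrite /sgn indicE memNset // mulr0 sub0r.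
  rewrite (_ : Complex _ _ = -1) ?mulN1r //; apply/eqP.
  by rewrite eq_complex /= oppr0 !eqxx.
Qed.

Lemma L2_integral_csq_gt0 (zeta : X -> complex R) (B : set X) :
  L2 mu zeta -> measurable B -> (forall x, B x -> zeta x != 0) -> (0 < mu B)%E ->
  exists2 m : R, 0 < m & m%:E = (\int[mu]_(x in B) (csq (zeta x))%:E)%E.
Proof.
move=> Lzeta mB zeta_neq0 muB.
have mcsq := measurable_csq (L2_cmeasurable Lzeta).
have csq_gt0 x : B x -> 0 < csq (zeta x).
  move=> Bx; rewrite lt_def csq_ge0 andbT.
  by apply: contra_neq (zeta_neq0 _ Bx) => /csq_eq0.
have Ipos := integral_pos_gt0 mB mcsq csq_gt0 muB.
have Ifin := L2_subset_integral_lty mB Lzeta.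
exists (fine (\int[mu]_(x in B) (csq (zeta x))%:E)%E); last by rewrite fineK ?ge0_fin_numE ?(ltW Ipos).
by rewrite fine_gt0 ?Ipos.
Qed.

Variable A : set X.
Hypotheses (mA : measurable A) (AD : A `<=` D).
Hypotheses (muA_gt0 : (0 < mu A)%E) (muA_lt : (mu A < mu D)%E).

(* A multiple [c xi] with [Re c <= 0] misses [g = zeta] on [A]; one with
   [Re c >= 0] misses [g = -zeta] on [D \ A]. *)
Lemma L2_far_from_multiples : exists g : X -> complex R, L2 mu g /\
  exists2 eps : R, 0 < eps & forall (S : X -> complex R) (c : complex R),
    cmeasurable S -> {ae mu, forall x, D x -> S x = c * xi x} ->
    (eps%:E <= \int[mu]_x (csq (g x - S x))%:E)%E.
Proof.
have [zeta [Lzeta zeta_neq0 xi_zeta]] := L2_nonvanishing_modification.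
have [g [Lg gA gDA]] := L2_sign_flip Lzeta mA.
have mDA := measurableD mD mA.
have [mass_A massA_gt0 massA] :=
  L2_integral_csq_gt0 Lzeta mA (fun x Ax => zeta_neq0 x (AD Ax)) muA_gt0.
have [mass_DA massDA_gt0 massDA] := L2_integral_csq_gt0 Lzeta mDA
  (fun x DAx => zeta_neq0 x DAx.1) (measureD_gt0 mA mD AD muA_lt).
exists g; split => //; exists (Num.min mass_A mass_DA); first by rewrite lt_min massA_gt0.
move=> S c mS Sc.
have err_ge B : measurable B ->
    {ae mu, forall x, B x -> csq (zeta x) <= csq (g x - S x)} ->
    (\int[mu]_(x in B) (csq (zeta x))%:E <= \int[mu]_x (csq (g x - S x))%:E)%E.
  move=> mB; apply: ae_le_subset_integral mB (measurable_csq (L2_cmeasurable Lzeta))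
    (measurable_csq (cmeasurableB (L2_cmeasurable Lg) mS)) _ _ => x; exact: csq_ge0.
have [Rec|Rec] := lerP (complex.Re c) 0.
- apply: (@le_trans _ _ mass_A%:E); first by rewrite lee_fin ge_min lexx.
  rewrite massA; apply: err_ge mA _.
  apply: filterS Sc => x Sx Ax; rewrite gA // (Sx (AD Ax)).
  exact: csq_le_csq_sub_mul (xi_zeta _ (AD Ax)) Rec.
- apply: (@le_trans _ _ mass_DA%:E); first by rewrite lee_fin ge_min lexx orbT.
  rewrite massDA; apply: err_ge mDA _.
  apply: filterS Sc => x Sx [Dx nAx]; rewrite gDA // (Sx Dx).
  rewrite (_ : _ - _ = - (zeta x - - c * xi x)); last by ring.
  rewrite csqN; apply: csq_le_csq_sub_mul (xi_zeta _ Dx) _.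
  by rewrite ReN oppr_le0 ltW.
Qed.

End far_from_multiples.

Unset Implicit Arguments.
Set Strict Implicit.

Theorem proposition3p9 (k : nat) (L : kgraph k)
    (d : measure_display) (X : measurableType d) (R : realType)
    (mu : {measure set X -> \bar R})
    (D : L -> set X) (tau : L -> X -> X) (coding : degk k -> X -> X)
    (v : kg_obj L) (Xv : set X) :
  row_finite L -> source_free L ->
  sigma_finite setT mu ->
  Lambda_SBFS mu D tau coding ->
  (forall t : L, kg_rng t = v ->
     sbfs_range D tau t = D (kg_id v) /\
     sbfs_range D tau (kg_comp (kg_id v) t) = D (kg_id v)) ->
  measurable Xv -> Xv `<=` D (kg_id v) ->
  (0 < mu Xv)%E -> (mu Xv < mu (D (kg_id v)))%E ->
  forall f : L -> X -> complex R,
    arising_proj_rep mu D tau coding f -> ~ monic_rep mu coding f.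
Proof.
move=> _ _ _ sbfs range_v mXv XvD muXv_gt0 muXv_lt f frep.
move=> [_ [xi [Lxi [eta [adj span_dense]]]]].
have [mDv _ muDv] := sbfs_dom sbfs (kg_id v).
have [g [Lg [eps eps_gt0 g_far]]] :=
  L2_far_from_multiples mDv muDv Lxi mXv XvD muXv_gt0 muXv_lt.
have [s approx] := span_dense g Lg eps eps_gt0.
have [c span_xi] := span_projT_adjoint_on_vertex sbfs frep
  (fun t rt => (range_v t rt).1) Lxi adj s.
have mspan : cmeasurable (fun x => \sum_(p <- s) p.2 * projT coding f p.1 (eta p.1) x).
  apply: cmeasurable_sum => -[l a] /=; apply: cmeasurableM; first exact: cmeasurable_cst.
  exact: (cmeasurable_projT sbfs frep l (L2_cmeasurable (proj1 (adj l)))).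
by have := g_far _ c mspan span_xi; rewrite leNgt approx.
Qed.
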